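(* Let $(G,{\bf p})$ be a framework in $\mathbb R^d$ whose configuration ${\bf p}$ has $d$-dimensional affine span. Let $\tilde V$ be a subset of the vertices, $\tilde G$ the subgraph induced on $\tilde V$, and $\tilde{\bf p}$ the corresponding subconfiguration, and suppose $(\tilde G,\tilde{\bf p})$ is universally rigid and the affine span of $\tilde{\bf p}$ has dimension $\tilde d<d$. Suppose that for each vertex $i\notin\tilde V$, the affine span of the points ${\bf p}_k$ for neighbours $k\in\tilde V$ of $i$ has dimension $\tilde d$. Write $\mathbb R^d=\mathbb R^{\tilde d}\times\mathbb R^{d-\tilde d}$ with the affine span of $\tilde{\bf p}$ equal to $\mathbb R^{\tilde d}\times\{{\bf p}_0\}$, and let $\pi:\mathbb R^d\to\mathbb R^{d-\tilde d}$ be the orthogonal projection onto the second factor, so $\pi$ maps all points of $\tilde{\bf p}$ to ${\bf p}_0$. Let $G'$ be the subgraph of $G$ induced on the vertices not in $\tilde V$. Then $(G,{\bf p})$ is universally rigid (respectively dimensionally rigid) if and only if the coned framework ${\bf p}_0*(G',\pi({\bf p}))$ in $\mathbb R^{d-\tilde d}$ is universally rigid (respectively dimensionally rigid).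
   Context: The coned framework ${\bf p}_0*(G',\pi({\bf p}))$ has a vertex at ${\bf p}_0$ joined by bars to every vertex $i$ of $G'$, vertex $i$ placed at $\pi({\bf p}_i)$, together with the bars of $G'$. A framework is universally rigid if every configuration in any $\mathbb R^D$ with the same bar lengths has all pairwise distances equal to those of the original; a framework with $d'$-dimensional affine span is dimensionally rigid if every configuration in any $\mathbb R^D$ with the same bar lengths has affine span of dimension at most $d'$. *)

From HB Require Import structures.
From mathcomp Require Import all_boot all_order all_algebra.
Set Implicit Arguments. Unset Strict Implicit. Unset Printing Implicit Defensive.
Import Order.TTheory GRing.Theory Num.Theory.
Local Open Scope ring_scope.

Definition sqd (R : rcfType) (D : nat) (x y : 'rV[R]_D) : R :=
  \sum_(k < D) (x 0 k - y 0 k) ^+ 2.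

(* dimension of the affine span of the points p i, i in A
   (= -1 for the empty set, otherwise the dimension of the linear span of
   all differences p i - p j, i, j in A) *)
Definition affdim (R : rcfType) (V : finType) (D : nat) (p : V -> 'rV[R]_D)
    (A : {set V}) : int :=
  if A == set0 then (-1)%R
  else (\rank (\sum_(i in A) \sum_(j in A) <<p i - p j>>)%MS)%:Z.

Definition equiv_on (R : rcfType) (V : finType) (e : rel V) (W : {set V})
    (D D' : nat) (p : V -> 'rV[R]_D) (q : V -> 'rV[R]_D') : Prop :=
  forall i j, i \in W -> j \in W -> e i j -> sqd (q i) (q j) = sqd (p i) (p j).

Definition univ_rigid (R : rcfType) (V : finType) (e : rel V) (W : {set V})
    (d : nat) (p : V -> 'rV[R]_d) : Prop :=
  forall (D : nat) (q : V -> 'rV[R]_D), equiv_on e W p q ->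
    forall i j, i \in W -> j \in W -> sqd (q i) (q j) = sqd (p i) (p j).

Definition dim_rigid (R : rcfType) (V : finType) (e : rel V) (W : {set V})
    (d : nat) (p : V -> 'rV[R]_d) : Prop :=
  forall (D : nat) (q : V -> 'rV[R]_D), equiv_on e W p q ->
    (affdim q W <= affdim p W)%R.

(* coned framework p0 * (G', pi(p)):  vertex None is the cone vertex, Some i
   (i not in Vt) the vertices of G' *)
Definition cone_rel (V : finType) (e : rel V) : rel (option V) :=
  fun x y => match x, y with
             | None, None => false
             | None, Some _ => true
             | Some _, None => true
             | Some i, Some j => e i j
             end.

Definition cone_verts (V : finType) (Vt : {set V}) : {set option V} :=
  [set x : option V | if x is Some i then i \notin Vt else true].

Definition cone_conf (R : rcfType) (V : finType) (dt d2 : nat)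
    (p0 : 'rV[R]_d2) (p : V -> 'rV[R]_(dt + d2)) : option V -> 'rV[R]_d2 :=
  fun x => if x is Some i then rsubmx (p i) else p0.

From HB Require Import structures.
From mathcomp Require Import all_boot all_order all_algebra.
From mathcomp Require Import lra.
Set Implicit Arguments. Unset Strict Implicit. Unset Printing Implicit Defensive.
Import Order.TTheory GRing.Theory Num.Theory.
Local Open Scope ring_scope.

(* Write q for a configuration with the same bar lengths as p, and p = (l, r)
   for the block decomposition of R^(dt + d2).  By universal rigidity, q on Vt
   is congruent to l on Vt, so up to translation it is l *m Psi for some Psi
   with orthonormal rows (Gram matrix argument).  A vertex outside Vt has
   neighbours in Vt spanning the whole first factor, and its distances to them
   determine its component along the image of Psi: hence q = l *m Psi + s with
   s orthogonal to that image and constant on Vt.  The bar lengths of q then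
   split into those of l, which are automatic, and those of s, which are the
   bars of the coned framework whose cone vertex is the common value of s on
   Vt.  Conversely, a configuration s of the cone lifts to the configuration
   (l, s) of G.  Distances and ranks of affine spans add up along these
   decompositions, which transfers both universal and dimensional rigidity. *)

Section Euclid.
Variable R : rcfType.

Definition vdot n (u v : 'rV[R]_n) : R := (u *m v^T) 0 0.

Lemma vdotE n (u v : 'rV[R]_n) : vdot u v = \sum_k u 0 k * v 0 k.
Proof. by rewrite /vdot mxE; apply: eq_bigr => k _; rewrite mxE. Qed.

Lemma sqdE n (x y : 'rV[R]_n) : sqd x y = vdot (x - y) (x - y).
Proof. by rewrite /sqd vdotE; apply: eq_bigr => k _; rewrite expr2 !mxE. Qed.

Lemma vdotC n (u v : 'rV[R]_n) : vdot u v = vdot v u.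
Proof. by rewrite !vdotE; apply: eq_bigr => k _; rewrite mulrC. Qed.

Lemma vdotDl n (u v w : 'rV[R]_n) : vdot (u + v) w = vdot u w + vdot v w.
Proof. by rewrite /vdot mulmxDl mxE. Qed.

Lemma vdotBl n (u v w : 'rV[R]_n) : vdot (u - v) w = vdot u w - vdot v w.
Proof. by rewrite /vdot mulmxBl !mxE. Qed.

Lemma vdotDr n (u v w : 'rV[R]_n) : vdot w (u + v) = vdot w u + vdot w v.
Proof. by rewrite vdotC vdotDl !(vdotC w). Qed.

Lemma vdotBr n (u v w : 'rV[R]_n) : vdot w (u - v) = vdot w u - vdot w v.
Proof. by rewrite vdotC vdotBl !(vdotC w). Qed.

Lemma vdot0l n (w : 'rV[R]_n) : vdot 0 w = 0.
Proof. by rewrite /vdot mul0mx mxE. Qed.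

Lemma vdot0r n (w : 'rV[R]_n) : vdot w 0 = 0.
Proof. by rewrite /vdot trmx0 mulmx0 mxE. Qed.

Lemma vdotMl m n (u : 'rV[R]_m) (A : 'M[R]_(m, n)) v :
  vdot (u *m A) v = vdot u (v *m A^T).
Proof. by rewrite /vdot trmx_mul trmxK mulmxA. Qed.

Lemma vdotMr m n (u : 'rV[R]_m) (A : 'M[R]_(m, n)) v :
  vdot v (u *m A) = vdot (v *m A^T) u.
Proof. by rewrite vdotC vdotMl vdotC. Qed.

Lemma mulmx_trE m k n (M : 'M[R]_(m, n)) (N : 'M[R]_(k, n)) i j :
  (M *m N^T) i j = vdot (row i M) (row j N).
Proof. by rewrite vdotE mxE; apply: eq_bigr => l _; rewrite !mxE. Qed.

Lemma vdot_row_mx m n (a c : 'rV[R]_m) (b d : 'rV[R]_n) :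
  vdot (row_mx a b) (row_mx c d) = vdot a c + vdot b d.
Proof. by rewrite /vdot tr_row_mx mul_row_col mxE. Qed.

Lemma vdot_eq0 n (u w : 'rV[R]_n) : vdot u w = 0 -> u *m w^T = 0.
Proof. by move=> uw0; apply/matrixP => a b; rewrite !ord1 [RHS]mxE -uw0. Qed.

Lemma vdot_self_eq0 n (u : 'rV[R]_n) : vdot u u = 0 -> u = 0.
Proof.
rewrite vdotE => uu0; apply/rowP => k; rewrite mxE; apply/eqP; rewrite -sqrf_eq0.
by apply/eqP; apply: (psumr_eq0P _ uu0) => // i _; rewrite -expr2 sqr_ge0.
Qed.

Lemma mulmx_tr_eq0 m n (A : 'M[R]_(m, n)) : A *m A^T = 0 -> A = 0.
Proof.
move=> AAt0; apply/row_matrixP => i; rewrite row0; apply: vdot_self_eq0.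
have := congr1 (fun M : 'M[R]_m => M i i) AAt0; rewrite !mxE => <-; rewrite vdotE.
by apply: eq_bigr => k _; rewrite !mxE.
Qed.

Lemma vdotBB n (a b : 'rV[R]_n) :
  vdot (a - b) (a - b) = vdot a a - vdot a b *+ 2 + vdot b b.
Proof. rewrite !vdotBl !vdotBr (vdotC b a); lra. Qed.

Lemma vdot_polar n m (a b : 'rV[R]_n) (c d : 'rV[R]_m) :
  vdot (a - b) (a - b) = vdot (c - d) (c - d) -> vdot a a = vdot c c ->
  vdot b b = vdot d d -> vdot a b = vdot c d.
Proof. rewrite !vdotBB => abcd aa bb; lra. Qed.

Lemma subrBB (M : zmodType) (a b c : M) : (a - c) - (b - c) = a - b.
Proof. by rewrite opprB addrA subrK. Qed.

Lemma sqdC n (x y : 'rV[R]_n) : sqd x y = sqd y x.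
Proof. rewrite !sqdE !vdotBB (vdotC y x); lra. Qed.

Lemma sqdxx n (x : 'rV[R]_n) : sqd x x = 0.
Proof. by rewrite sqdE subrr vdot0r. Qed.

Lemma sqdBr n (x y c : 'rV[R]_n) : sqd (x - c) (y - c) = sqd x y.
Proof. by rewrite !sqdE subrBB. Qed.

Lemma sqd_row_mx m n (a c : 'rV[R]_m) (b d : 'rV[R]_n) :
  sqd (row_mx a b) (row_mx c d) = sqd a c + sqd b d.
Proof. by rewrite !sqdE opp_row_mx add_row_mx vdot_row_mx. Qed.

Lemma sqd_hsubmx m n (x y : 'rV[R]_(m + n)) :
  sqd x y = sqd (lsubmx x) (lsubmx y) + sqd (rsubmx x) (rsubmx y).
Proof. by rewrite -sqd_row_mx !hsubmxK. Qed.

Lemma vdot_orthogonal_sum m n (Psi : 'M[R]_(m, n)) (u : 'rV[R]_m) (s : 'rV[R]_n) :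
  Psi *m Psi^T = 1%:M -> s *m Psi^T = 0 ->
  vdot (u *m Psi + s) (u *m Psi + s) = vdot u u + vdot s s.
Proof.
move=> PsiO sPsi; rewrite !vdotDl !vdotDr !vdotMl -mulmxA PsiO mulmx1.
by rewrite (vdotC s) vdotMl sPsi vdot0r add0r addr0.
Qed.

(* Psi := L X with L a left inverse of T; then X - T Psi has zero Gram matrix. *)
Lemma gram_factor m n d (X : 'M[R]_(m, n)) (T : 'M[R]_(m, d)) :
  X *m X^T = T *m T^T -> row_full T ->
  exists2 Psi : 'M[R]_(d, n), Psi *m Psi^T = 1%:M & X = T *m Psi.
Proof.
move=> gramXT /row_fullP [L LT1].
have TLt1 : T^T *m L^T = 1%:M by rewrite -trmx_mul LT1 trmx1.
exists (L *m X).
  by rewrite trmx_mul !mulmxA -(mulmxA L X) gramXT !mulmxA LT1 mul1mx TLt1.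
have XPsi : X *m (T *m (L *m X))^T = T *m T^T.
  by rewrite !trmx_mul !mulmxA gramXT -(mulmxA T) TLt1 mulmx1.
have PsiX : (T *m (L *m X)) *m X^T = T *m T^T.
  by rewrite !mulmxA -(mulmxA (T *m L)) gramXT !mulmxA -(mulmxA T L T) LT1 mulmx1.
have PsiPsi : (T *m (L *m X)) *m (T *m (L *m X))^T = T *m T^T.
  rewrite !trmx_mul !mulmxA -(mulmxA (T *m L) X) gramXT !mulmxA -(mulmxA T L T).
  by rewrite LT1 mulmx1 -(mulmxA T T^T L^T) TLt1 mulmx1.
apply/eqP; rewrite -subr_eq0; apply/eqP; apply: mulmx_tr_eq0.
by rewrite linearB /= mulmxBl !mulmxBr XPsi PsiX PsiPsi gramXT !subrr.
Qed.

End Euclid.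

Definition diffspan (R : rcfType) (V : finType) D (f : V -> 'rV[R]_D) (A : {set V})
  : 'M[R]_D := (\sum_(i in A) \sum_(j in A) <<f i - f j>>)%MS.

Section DiffSpan.
Variables (R : rcfType) (V : finType).
Implicit Types A B : {set V}.

Lemma affdimE D (f : V -> 'rV[R]_D) A :
  A != set0 -> affdim f A = (\rank (diffspan f A))%:Z.
Proof. by rewrite /affdim => /negbTE ->. Qed.

Lemma affdim_natP D (f : V -> 'rV[R]_D) A k :
  affdim f A = k%:Z -> A != set0 /\ \rank (diffspan f A) = k.
Proof. by rewrite /affdim; case: eqP => // _ [rk]. Qed.

Lemma diffspan_sub D (f : V -> 'rV[R]_D) A k l :
  k \in A -> l \in A -> (f k - f l <= diffspan f A)%MS.
Proof.
by move=> kA lA; apply: (sumsmx_sup k) => //; apply: (sumsmx_sup l); rewrite ?genmxE.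
Qed.

Lemma diffspan_subP D (f : V -> 'rV[R]_D) A m (W : 'M[R]_(m, D)) :
  (forall k l, k \in A -> l \in A -> (f k - f l <= W)%MS) -> (diffspan f A <= W)%MS.
Proof.
move=> fW; apply/sumsmx_subP => k kA; apply/sumsmx_subP => l lA.
by rewrite genmxE; apply: fW.
Qed.

Lemma diffspan_mulmx_subP D n (f : V -> 'rV[R]_D) A m (M : 'M[R]_(D, n))
    (W : 'M[R]_(m, n)) :
  (forall k l, k \in A -> l \in A -> ((f k - f l) *m M <= W)%MS) ->
  (diffspan f A *m M <= W)%MS.
Proof.
move=> fMW; rewrite sumsmxMr_gen; apply/sumsmx_subP => k kA.
rewrite genmxE sumsmxMr_gen; apply/sumsmx_subP => l lA.
by rewrite genmxE (eqmxMr M (genmxE _)); apply: fMW.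
Qed.

Lemma diffspan_subr D (f : V -> 'rV[R]_D) (c : 'rV[R]_D) A :
  diffspan (fun i => f i - c) A = diffspan f A.
Proof. by apply: eq_bigr => i _; apply: eq_bigr => j _; rewrite subrBB. Qed.

Lemma lsubmx_diffspan_full m n (p : V -> 'rV[R]_(m + n)) A (c : 'rV[R]_n) :
  (forall i, i \in A -> rsubmx (p i) = c) -> affdim p A = m%:Z ->
  (1%:M <= diffspan (fun i => lsubmx (p i)) A)%MS.
Proof.
move=> pAc /affdim_natP [_ rk_p]; rewrite sub1mx /row_full.
apply/eqP/anti_leq; rewrite rank_leq_col -{1}rk_p.
apply: leq_trans (mxrankM_maxl _ (row_mx (1%:M : 'M_m) (0 : 'M_(m, n)))).
apply: mxrankS; apply: diffspan_subP => k l kA lA.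
have -> : p k - p l = (lsubmx (p k) - lsubmx (p l)) *m row_mx 1%:M 0.
  rewrite mul_mx_row mulmx1 mulmx0 -(subrr c) -{1}(pAc k kA) -(pAc l lA).
  by rewrite -add_row_mx -opp_row_mx !hsubmxK.
by rewrite submxMr // (diffspan_sub (fun i => lsubmx (p i))).
Qed.

Lemma rank_diffspan_decomp D m n k (f : V -> 'rV[R]_D) (g : V -> 'rV[R]_m)
    (h : V -> 'rV[R]_n) (M : 'M[R]_(m, D)) (N : 'M[R]_(n, D)) A :
  (forall i j, i \in A -> j \in A -> f i - f j = (g i - g j) *m M + (h i - h j) *m N) ->
  (\rank M <= k)%N ->
  (\rank (diffspan f A) <= k + \rank (diffspan h A))%N.
Proof.
move=> f_decomp rkM.
have : (diffspan f A <= M + diffspan h A *m N)%MS.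
  apply: diffspan_subP => i j iA jA; rewrite f_decomp //.
  by apply: addmx_sub_adds; [exact: submxMl | apply: submxMr; exact: diffspan_sub].
move/mxrankS/leq_trans; apply; apply: leq_trans (mxrank_adds_leqif _ _).1 _.
by rewrite leq_add // mxrankM_maxl.
Qed.

(* The rows (v, 0) lie in the span and in the kernel of its projection onto the
   second block. *)
Lemma rank_diffspan_row_mx m n (g : V -> 'rV[R]_m) (h : V -> 'rV[R]_n) A B :
  B \subset A -> (forall i j, i \in B -> j \in B -> h i = h j) ->
  (1%:M <= diffspan g B)%MS ->
  (m + \rank (diffspan h A) <= \rank (diffspan (fun i => row_mx (g i) (h i)) A))%N.
Proof.
move=> /subsetP BA hB gB_full.
pose S := diffspan (fun i => row_mx (g i) (h i)) A.
pose L := row_mx (1%:M : 'M[R]_m) (0 : 'M[R]_(m, n)).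
pose P := col_mx (0 : 'M[R]_(m, n)) (1%:M : 'M[R]_n).
have LS : (L <= S)%MS.
  rewrite -[L]mul1mx; apply: submx_trans (submxMr L gB_full) _.
  apply: diffspan_mulmx_subP => k l kB lB.
  rewrite /L mul_mx_row mulmx1 mulmx0 -(subrr (h k)) {2}(hB k l kB lB).
  by rewrite -add_row_mx -opp_row_mx diffspan_sub ?BA.
have LP : (L <= kermx P)%MS.
  by apply/sub_kermxP; rewrite /L /P mul_row_col mulmx0 mul0mx addr0.
have rkL : \rank L = m.
  apply/eqP; rewrite eqn_leq rank_leq_row /=.
  have := mxrankM_maxl L (col_mx (1%:M : 'M[R]_m) (0 : 'M[R]_(n, m))).
  by rewrite /L mul_row_col mulmx1 mulmx0 addr0 mxrank1.
have hSP : (diffspan h A <= S *m P)%MS.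
  apply: diffspan_subP => i j iA jA.
  have -> : h i - h j = (row_mx (g i) (h i) - row_mx (g j) (h j)) *m P.
    by rewrite /P mulmxBl !mul_row_col !mulmx0 !mulmx1 !add0r.
  by rewrite submxMr ?(diffspan_sub (fun i => row_mx (g i) (h i))).
rewrite -(mxrank_mul_ker S P) addnC leq_add ?mxrankS //.
by rewrite -{1}rkL mxrankS // sub_capmx LS LP.
Qed.

End DiffSpan.

Lemma diffspan_comp (R : rcfType) (V W : finType) D (f : W -> 'rV[R]_D)
    (phi : V -> W) (A : {set V}) (B : {set W}) :
  (forall i, i \in A -> phi i \in B) -> (diffspan (f \o phi) A <= diffspan f B)%MS.
Proof.
move=> phiAB; apply: diffspan_subP => k l kA lA.
exact: (diffspan_sub f (phiAB k kA) (phiAB l lA)).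
Qed.

Lemma diffspan_comp_onto (R : rcfType) (V W : finType) D (f : W -> 'rV[R]_D)
    (phi : V -> W) (A : {set V}) (B : {set W}) :
  (forall a, a \in B -> exists2 i, i \in A & a = phi i) ->
  (diffspan f B <= diffspan (f \o phi) A)%MS.
Proof.
move=> phi_onto; apply: diffspan_subP => a b /phi_onto [k kA ->] /phi_onto [l lA ->].
exact: (diffspan_sub (f \o phi)).
Qed.

Section Congruence.
Variables (R : rcfType) (V : finType).

Lemma congruent_isometry D m (f : V -> 'rV[R]_D) (g : V -> 'rV[R]_m) (A : {set V}) k0 :
  k0 \in A -> {in A &, forall k l, sqd (f k) (f l) = sqd (g k) (g l)} ->
  (1%:M <= diffspan g A)%MS ->
  exists2 Psi : 'M[R]_(m, D), Psi *m Psi^T = 1%:M &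
    {in A, forall k, f k - f k0 = (g k - g k0) *m Psi}.
Proof.
move=> k0A fg gA_full.
pose x k := f k - f k0; pose t k := g k - g k0.
have dot_xt : {in A &, forall k l, vdot (x k) (x l) = vdot (t k) (t l)}.
  have norm_xt : {in A, forall k, vdot (x k) (x k) = vdot (t k) (t k)}.
    by move=> k kA; rewrite -!sqdE fg.
  move=> k l kA lA; apply: vdot_polar; rewrite ?norm_xt //.
  by rewrite -!sqdE !sqdBr fg.
pose X := \matrix_(a < #|V|) (if enum_val a \in A then x (enum_val a) else 0).
pose T := \matrix_(a < #|V|) (if enum_val a \in A then t (enum_val a) else 0).
have gramXT : X *m X^T = T *m T^T.
  apply/matrixP => a b; rewrite !mulmx_trE !rowK.
  by case: ifP => aA; case: ifP => bA; rewrite ?vdot0l ?vdot0r ?dot_xt.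
have T_full : row_full T.
  rewrite -sub1mx; apply: submx_trans gA_full _; apply: diffspan_subP => k l kA lA.
  have -> : g k - g l = row (enum_rank k) T - row (enum_rank l) T.
    by rewrite !rowK !enum_rankK kA lA subrBB.
  by rewrite !rowE -mulmxBl submxMl.
have [Psi PsiO XTPsi] := gram_factor gramXT T_full.
exists Psi => // k kA; have := congr1 (row (enum_rank k)) XTPsi.
by rewrite row_mul !rowK enum_rankK kA.
Qed.

(* The distances from x to the points y k determine the inner products of
   x *m Psi^T with the differences s k - s l, which span everything. *)
Lemma isometry_coord_eq D m (Psi : 'M[R]_(m, D)) (B : {set V}) (y : V -> 'rV[R]_D)
    (s : V -> 'rV[R]_m) (x : 'rV[R]_D) (t : 'rV[R]_m) (c : R) :
  Psi *m Psi^T = 1%:M -> {in B, forall k, y k = s k *m Psi} ->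
  {in B, forall k, sqd x (y k) = sqd t (s k) + c} -> (1%:M <= diffspan s B)%MS ->
  x *m Psi^T = t.
Proof.
move=> PsiO ysPsi dist sB_full; apply/eqP; rewrite -subr_eq0; apply/eqP.
set w := x *m Psi^T - t.
have ws : {in B &, forall k l, vdot w (s k) = vdot w (s l)}.
  have expand k : k \in B ->
      vdot x x - vdot (x *m Psi^T) (s k) *+ 2 = vdot t t - vdot t (s k) *+ 2 + c.
    move=> kB; have := dist k kB; rewrite !sqdE !vdotBB ysPsi //.
    rewrite (vdotMr (s k) Psi x) (vdotMl (s k) Psi) -mulmxA PsiO mulmx1; lra.
  by move=> k l kB lB; rewrite !vdotBl; have := expand k kB; have := expand l lB; lra.
have : (diffspan s B <= kermx w^T)%MS.
  apply: diffspan_subP => k l kB lB; apply/sub_kermxP/vdot_eq0.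
  by rewrite vdotC vdotBr (ws k l kB lB) subrr.
move=> /(submx_trans sB_full) /sub_kermxP; rewrite mul1mx => /(congr1 trmx).
by rewrite trmxK trmx0.
Qed.

End Congruence.

Section ConeReduction.
Variables (R : rcfType) (V : finType) (e : rel V) (dt d2 : nat).
Variables (p : V -> 'rV[R]_(dt + d2)) (Vt : {set V}) (p0 : 'rV[R]_d2).
Hypothesis p_ur : univ_rigid e Vt p.
Hypothesis affdim_Vt : affdim p Vt = dt%:Z.
Hypothesis rsubmx_Vt : forall i, i \in Vt -> rsubmx (p i) = p0.
Hypothesis affdim_nbhd : forall i, i \notin Vt -> affdim p [set k in Vt | e i k] = dt%:Z.

Local Notation lp i := (lsubmx (p i)).
Local Notation cp := (cone_conf p0 p).
Local Notation equiv_cone := (equiv_on (cone_rel e) (cone_verts Vt) cp).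

Definition cone_of (i : V) : option V := if i \in Vt then None else Some i.

Definition cone_lift D (q : option V -> 'rV[R]_D) (i : V) : 'rV[R]_(dt + D) :=
  row_mx (lp i) (q (cone_of i)).

Lemma Vt_neq0 : Vt != set0.
Proof. by case: (affdim_natP affdim_Vt). Qed.

Lemma nbhd_neq0 i : i \notin Vt -> exists2 k, k \in Vt & e i k.
Proof.
move=> iVt; have [/set0Pn [k] ] := affdim_natP (affdim_nbhd iVt).
by rewrite inE => /andP [kVt ik]; exists k.
Qed.

Lemma cone_of_mem i : cone_of i \in cone_verts Vt.
Proof. by rewrite /cone_of inE; case: ifP => // ->. Qed.

Lemma cone_of_Vt i : i \in Vt -> cone_of i = None.
Proof. by rewrite /cone_of => ->. Qed.

Lemma cone_of_out i : i \notin Vt -> cone_of i = Some i.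
Proof. by rewrite /cone_of => /negbTE ->. Qed.

Lemma cone_of_onto a : a \in cone_verts Vt -> exists2 i, i \in [set: V] & a = cone_of i.
Proof.
case: a => [i|] a_in.
  by move: a_in; rewrite inE => iVt; exists i; rewrite ?inE ?cone_of_out.
by have /set0Pn [k kVt] := Vt_neq0; exists k; rewrite ?cone_of_Vt.
Qed.

Lemma rank_diffspan_cone_of D (q : option V -> 'rV[R]_D) :
  \rank (diffspan (q \o cone_of) [set: V]) = \rank (diffspan q (cone_verts Vt)).
Proof.
apply/eqP; rewrite eqn_leq; apply/andP; split; apply: mxrankS.
  by apply: diffspan_comp => i _; apply: cone_of_mem.
exact: diffspan_comp_onto cone_of_onto.
Qed.

Lemma cone_conf_of i : cp (cone_of i) = rsubmx (p i).
Proof. by rewrite /cone_of; case: ifP => //= /rsubmx_Vt ->. Qed.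

Lemma sqd_cone_split i j :
  sqd (p i) (p j) = sqd (lp i) (lp j) + sqd (cp (cone_of i)) (cp (cone_of j)).
Proof. by rewrite sqd_hsubmx !cone_conf_of. Qed.

Lemma sqd_cone_lift D (q : option V -> 'rV[R]_D) i j :
  sqd (cone_lift q i) (cone_lift q j) =
  sqd (lp i) (lp j) + sqd (q (cone_of i)) (q (cone_of j)).
Proof. exact: sqd_row_mx. Qed.

Lemma cone_edgeP a b : a \in cone_verts Vt -> b \in cone_verts Vt -> cone_rel e a b ->
  exists i, exists j, [/\ a = cone_of i, b = cone_of j & e i j || e j i].
Proof.
case: a => [i|]; case: b => [j|] //=; rewrite !inE => a_in b_in ab.
- by exists i, j; rewrite !cone_of_out ?ab.
- have [k kVt ik] := nbhd_neq0 a_in.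
  by exists i, k; rewrite (cone_of_out a_in) (cone_of_Vt kVt) ik.
- have [k kVt jk] := nbhd_neq0 b_in.
  by exists k, j; rewrite (cone_of_out b_in) (cone_of_Vt kVt) jk orbT.
Qed.

Lemma equiv_cone_lift D (q : option V -> 'rV[R]_D) :
  equiv_cone q -> equiv_on e [set: V] p (cone_lift q).
Proof.
move=> q_eq i j _ _ ij; rewrite sqd_cone_lift sqd_cone_split; congr (_ + _).
case: (boolP (i \in Vt)) => iVt; case: (boolP (j \in Vt)) => jVt.
- by rewrite !cone_of_Vt // !sqdxx.
- by apply: q_eq; rewrite ?cone_of_mem // (cone_of_Vt iVt) (cone_of_out jVt).
- by apply: q_eq; rewrite ?cone_of_mem // (cone_of_out iVt) (cone_of_Vt jVt).
- by apply: q_eq; rewrite ?cone_of_mem // (cone_of_out iVt) (cone_of_out jVt).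
Qed.

Lemma congruent_on_Vt D (q : V -> 'rV[R]_D) :
  equiv_on e [set: V] p q -> {in Vt &, forall k l, sqd (q k) (q l) = sqd (lp k) (lp l)}.
Proof.
move=> q_eq k l kVt lVt.
rewrite (p_ur (fun i j _ _ => q_eq i j (in_setT i) (in_setT j))) //.
by rewrite sqd_hsubmx !rsubmx_Vt // sqdxx addr0.
Qed.

Lemma orthogonal_decomp D (q : V -> 'rV[R]_D) :
  equiv_on e [set: V] p q ->
  exists Psi : 'M[R]_(dt, D), exists r : V -> 'rV[R]_D,
  [/\ Psi *m Psi^T = 1%:M, {in Vt, forall i, r i = 0}, (forall i, r i *m Psi^T = 0) &
      forall i j, q i - q j = (lp i - lp j) *m Psi + (r i - r j)].
Proof.
move=> q_eq; have /set0Pn [k0 k0Vt] := Vt_neq0.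
have lp_full := lsubmx_diffspan_full rsubmx_Vt affdim_Vt.
have [Psi PsiO q_Psi] := congruent_isometry k0Vt (congruent_on_Vt q_eq) lp_full.
pose r i := (q i - q k0) - (lp i - lp k0) *m Psi.
have q_r i : q i - q k0 = (lp i - lp k0) *m Psi + r i by rewrite /r subrKC.
exists Psi, r; split => //.
- by move=> i iVt; rewrite /r q_Psi ?subrr.
- move=> i; apply/eqP; rewrite /r mulmxBl -mulmxA PsiO mulmx1 subr_eq0; apply/eqP.
  case: (boolP (i \in Vt)) => iVt; first by rewrite q_Psi // -mulmxA PsiO mulmx1.
  have NVt : {subset [set k in Vt | e i k] <= Vt} by move=> k; rewrite inE => /andP [].
  apply: (isometry_coord_eq (y := fun k => q k - q k0) (s := fun k => lp k - lp k0)
    (c := sqd (rsubmx (p i)) p0) PsiO).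
  + by move=> k /NVt; apply: q_Psi.
  + move=> k; rewrite inE => /andP [kVt ik].
    by rewrite !sqdBr q_eq ?inE // sqd_hsubmx (rsubmx_Vt kVt).
  + rewrite diffspan_subr; apply: lsubmx_diffspan_full (affdim_nbhd iVt) => k /NVt.
    exact: rsubmx_Vt.
- move=> i j; rewrite -(subrBB (q i) (q j) (q k0)) !q_r.
  by rewrite opprD addrACA -mulmxBl subrBB.
Qed.

Lemma cone_project D (q : V -> 'rV[R]_D) :
  equiv_on e [set: V] p q ->
  exists Psi : 'M[R]_(dt, D), exists r : option V -> 'rV[R]_D,
  [/\ equiv_cone r,
      forall i j,
        sqd (q i) (q j) = sqd (lp i) (lp j) + sqd (r (cone_of i)) (r (cone_of j)) &
      forall i j, q i - q j = (lp i - lp j) *m Psi + (r (cone_of i) - r (cone_of j))].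
Proof.
move=> q_eq; have [Psi [r [PsiO r_Vt rPsi q_diff]]] := orthogonal_decomp q_eq.
pose r' a := if a is Some i then r i else 0.
have r'_of i : r' (cone_of i) = r i by rewrite /cone_of; case: ifP => // /r_Vt ->.
have q_sqd i j :
    sqd (q i) (q j) = sqd (lp i) (lp j) + sqd (r' (cone_of i)) (r' (cone_of j)).
  by rewrite !r'_of !sqdE q_diff vdot_orthogonal_sum // mulmxBl !rPsi subrr.
exists Psi, r'; split => //; last by move=> i j; rewrite !r'_of.
have edge k l : e k l ->
    sqd (r' (cone_of k)) (r' (cone_of l)) = sqd (cp (cone_of k)) (cp (cone_of l)).
  move=> kl; apply: (@addrI _ (sqd (lp k) (lp l))).
  by rewrite -q_sqd -sqd_cone_split q_eq ?inE.
move=> a b a_in b_in /(cone_edgeP a_in b_in) [i [j [-> -> /orP [/edge // | /edge ji]]]].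
by rewrite sqdC ji sqdC.
Qed.

Lemma rank_diffspan_cone_decomp D n (q : V -> 'rV[R]_D) (M : 'M[R]_(dt, D))
    (r : option V -> 'rV[R]_n) (N : 'M[R]_(n, D)) :
  (forall i j, q i - q j = (lp i - lp j) *m M + (r (cone_of i) - r (cone_of j)) *m N) ->
  (\rank (diffspan q [set: V]) <= dt + \rank (diffspan r (cone_verts Vt)))%N.
Proof.
move=> q_decomp; rewrite -rank_diffspan_cone_of.
exact: (rank_diffspan_decomp (h := r \o cone_of) (fun i j _ _ => q_decomp i j)
  (rank_leq_row M)).
Qed.

Lemma p_cone_decomp i j :
  p i - p j = (lp i - lp j) *m row_mx (1%:M : 'M_dt) (0 : 'M_(dt, d2))
              + (cp (cone_of i) - cp (cone_of j)) *m row_mx (0 : 'M_(d2, dt)) 1%:M.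
Proof.
rewrite !cone_conf_of !mul_mx_row !mulmx1 !mulmx0 add_row_mx addr0 add0r.
by rewrite -add_row_mx -opp_row_mx !hsubmxK.
Qed.

Lemma cone_verts_neq0 : cone_verts Vt != set0.
Proof. by apply/set0Pn; exists None; rewrite inE. Qed.

Lemma univ_rigid_cone :
  univ_rigid e [set: V] p -> univ_rigid (cone_rel e) (cone_verts Vt) cp.
Proof.
move=> urG D q q_eq a b /cone_of_onto [i _ ->] /cone_of_onto [j _ ->].
have := urG _ _ (equiv_cone_lift q_eq) i j (in_setT i) (in_setT j).
by rewrite sqd_cone_lift sqd_cone_split => /addrI.
Qed.

Lemma univ_rigid_of_cone :
  univ_rigid (cone_rel e) (cone_verts Vt) cp -> univ_rigid e [set: V] p.
Proof.
move=> urC D q q_eq i j _ _; have [Psi [r [r_eq q_sqd _]]] := cone_project q_eq.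
by rewrite q_sqd sqd_cone_split (urC _ _ r_eq) ?cone_of_mem.
Qed.

Hypothesis affdim_full : affdim p [set: V] = (dt + d2)%N%:Z.

Lemma rank_cone_conf : (d2 <= \rank (diffspan cp (cone_verts Vt)))%N.
Proof.
have [_ rk_p] := affdim_natP affdim_full.
by rewrite -(leq_add2l dt) -rk_p; apply: rank_diffspan_cone_decomp p_cone_decomp.
Qed.

Lemma dim_rigid_cone :
  dim_rigid e [set: V] p -> dim_rigid (cone_rel e) (cone_verts Vt) cp.
Proof.
move=> drG D q q_eq; have [T0 _] := affdim_natP affdim_full.
rewrite !affdimE ?cone_verts_neq0 // lez_nat; apply: leq_trans rank_cone_conf.
have := drG _ _ (equiv_cone_lift q_eq); rewrite affdim_full affdimE // lez_nat.
move=> rk_lift; rewrite -(leq_add2l dt) -rank_diffspan_cone_of; apply: leq_trans rk_lift.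
apply: (rank_diffspan_row_mx (g := fun i => lp i) (h := q \o cone_of) (subsetT Vt)).
  by move=> i j iVt jVt /=; rewrite !cone_of_Vt.
exact: lsubmx_diffspan_full rsubmx_Vt affdim_Vt.
Qed.

Lemma dim_rigid_of_cone :
  dim_rigid (cone_rel e) (cone_verts Vt) cp -> dim_rigid e [set: V] p.
Proof.
move=> drC D q q_eq; have [T0 _] := affdim_natP affdim_full.
have [Psi [r [r_eq _ q_diff]]] := cone_project q_eq.
have := drC _ _ r_eq; rewrite affdim_full !affdimE ?cone_verts_neq0 // !lez_nat => rk_r.
apply: leq_trans (rank_diffspan_cone_decomp (N := 1%:M) _) _.
  by move=> i j; rewrite mulmx1 q_diff.
by rewrite leq_add2l (leq_trans rk_r) ?rank_leq_col.
Qed.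

End ConeReduction.

Theorem mainTheorem11 (R : rcfType) (V : finType) (e : rel V)
  (e_sym : symmetric e) (e_irr : irreflexive e)
  (dt d2 : nat) (p : V -> 'rV[R]_(dt + d2)) (Vt : {set V}) (p0 : 'rV[R]_d2)
  (hspan : affdim p [set: V] = (dt + d2)%N%:Z)
  (hlt : (dt < dt + d2)%N)
  (hUR : univ_rigid e Vt p)
  (hVt : affdim p Vt = dt%:Z)
  (hp0 : forall i, i \in Vt -> rsubmx (p i) = p0)
  (hnb : forall i, i \notin Vt -> affdim p [set k in Vt | e i k] = dt%:Z) :
  (univ_rigid e [set: V] p <->
     univ_rigid (cone_rel e) (cone_verts Vt) (cone_conf p0 p)) /\
  (dim_rigid e [set: V] p <->
     dim_rigid (cone_rel e) (cone_verts Vt) (cone_conf p0 p)).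
Proof.
split; split.
- exact: univ_rigid_cone.
- exact: univ_rigid_of_cone.
- exact: dim_rigid_cone.
- exact: dim_rigid_of_cone.
Qed.
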